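(* Let $d$ be a positive integer and let $(A_{R,n})_{R,n\in\mathbb{N}}$ be a two-parameter sequence in a normed space with $\|A_{R,n}\|\le1$ for all $R,n$. Let $L\in\mathcal{H}$ be eventually positive with $1\prec L(t)\prec t$, and assume that for some $C>0$, $$\limsup_{R\to+\infty}\mathop{\mathbb{E}}_{1\le r\le R}\Big\|\mathop{\mathbb{E}}_{r\le n\le r+L(r)}A_{R,n}\Big\|^d\le C.$$ Then $\limsup_{R\to+\infty}\big\|\mathop{\mathbb{E}}_{1\le n\le R}A_{R,n}\big\|\le C^{1/d}$.
   Context: $\mathcal{H}$ is a fixed Hardy field (subfield of germs at $+\infty$ of real functions, closed under differentiation) containing the logarithmico-exponential functions, closed under composition and compositional inversion. $f\prec g$ means $f(t)/g(t)\to0$. $\mathbb{E}_{1\le n\le x}a(n)=\frac{1}{\lfloor x\rfloor}\sum_{n=1}^{\lfloor x\rfloor}a(n)$, and $\mathbb{E}_{r\le n\le r+L(r)}$ denotes the average over the integers $n$ in $[r,r+L(r)]$. *)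

From HB Require Import structures.
From mathcomp Require Import all_boot all_order all_algebra.
From mathcomp Require Import all_classical all_reals all_analysis.
Set Implicit Arguments. Unset Strict Implicit. Unset Printing Implicit Defensive.
Import Order.TTheory GRing.Theory Num.Theory.
Import numFieldNormedType.Exports.
Local Open Scope classical_set_scope.
Local Open Scope ring_scope.

Section Defs.
Variable R : realType.

Definition ev (P : R -> Prop) : Prop := \forall x \near +oo, P x.

(* Logarithmico-exponential functions (Hardy): built from the identity and
   real constants with field operations, exp and log. *)
Inductive LEfun : (R -> R) -> Prop :=
| LE_id : LEfun (fun x => x)
| LE_cst (c : R) : LEfun (fun _ => c)
| LE_add f g : LEfun f -> LEfun g -> LEfun (fun x => f x + g x)
| LE_opp f : LEfun f -> LEfun (fun x => - f x)
| LE_mul f g : LEfun f -> LEfun g -> LEfun (fun x => f x * g x)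
| LE_inv f : LEfun f -> ev (fun x => f x != 0) -> LEfun (fun x => (f x)^-1)
| LE_exp f : LEfun f -> LEfun (fun x => expR (f x))
| LE_ln f : LEfun f -> ev (fun x => 0 < f x) -> LEfun (fun x => ln (f x)).

(* H is a set of germs at +oo (represented by total functions, closed under
   eventual equality) forming a Hardy field: a subfield of the ring of germs
   closed under differentiation. *)
Definition hardy_field (H : set (R -> R)) : Prop :=
  [/\ (forall f g, H f -> ev (fun x => f x = g x) -> H g),
      H (fun _ => 0) /\ H (fun _ => 1),
      (forall f g, H f -> H g -> H (fun x => f x - g x)),
      (forall f g, H f -> H g -> H (fun x => f x * g x)) &
      (forall f, H f -> ~ ev (fun x => f x = 0) ->
         exists2 g, H g & ev (fun x => f x * g x = 1))] /\
  (forall f, H f -> ev (fun x => derivable f x 1) /\ H (derive1 f)).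

Definition standing_hardy (H : set (R -> R)) : Prop :=
  [/\ hardy_field H,
      (forall f, LEfun f -> H f),
      (forall f g, H f -> H g -> g x @[x --> +oo] --> +oo -> H (f \o g)) &
      (forall g, H g -> g x @[x --> +oo] --> +oo ->
         exists2 h, H h & [/\ h x @[x --> +oo] --> +oo,
                              ev (fun x => g (h x) = x) &
                              ev (fun x => h (g x) = x)])].

End Defs.

Section Avg.
Variables (R : realType) (V : normedModType R).

(* E_{1<=n<=N} a(n) = (1/N) sum_{n=1}^N a(n)  (0 when N = 0) *)
Definition avg1 (N : nat) (a : nat -> V) : V :=
  (N%:R)^-1 *: \sum_(1 <= n < N.+1) a n.

(* E_{r<=n<=r+L(r)} a(n): average over the integers n in [r, r + L(r)]
   (0 if there is none). *)
Definition avg_window (L : R -> R) (r : nat) (a : nat -> V) : V :=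
  let N := (r + Num.truncn (L r%:R)).+1 in
  ((\sum_(r <= n < N | n%:R <= r%:R + L r%:R) 1%N)%:R)^-1 *:
    \sum_(r <= n < N | n%:R <= r%:R + L r%:R) a n.

End Avg.

Definition prec (R : realType) (f g : R -> R) : Prop :=
  (f x / g x) @[x --> +oo] --> 0.

(* In a Hardy field L'' has an eventual sign, so L' is eventually monotone, and
   L ≺ t then forces L' -> 0: L is eventually eps-Lipschitz for every eps > 0.
   Hence, for n large, the windows [r, r + L(r)] containing n number about L(n)
   and have length about L(n), so the total weight with which a_n enters the
   sum of window averages  Σ_{r <= R} E_{r <= m <= r + L(r)} a_m  is close to 1.
   Exchanging summations, Σ_{n <= R} a_n differs from this sum by o(R), so
   ‖E_{n <= R} A_{R,n}‖ <= E_{r <= R} ‖window average‖ + o(1), and the power-mean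
   inequality bounds the right-hand side by (E_{r <= R} ‖window average‖^d)^(1/d). *)

From HB Require Import structures.
From mathcomp Require Import all_boot all_order all_algebra.
From mathcomp Require Import all_classical all_reals all_analysis.
From mathcomp Require Import ring lra zify.
Import Order.TTheory GRing.Theory Num.Theory Num.Def.
Import numFieldNormedType.Exports.
Local Open Scope classical_set_scope.
Local Open Scope ring_scope.
Set Implicit Arguments. Unset Strict Implicit. Unset Printing Implicit Defensive.

Section RealRay.
Variable R : realType.
Implicit Types (f g L : R -> R) (T a b c x y : R).

Lemma evP (P : R -> Prop) : ev P <-> exists M, forall x, M < x -> P x.
Proof.
split; first by move=> [M [_ PM]]; exists M.
by move=> [M PM]; exists M; split; [exact: num_real | exact: PM].
Qed.

Lemma ev_and (P Q : R -> Prop) : ev P -> ev Q -> ev (fun x => P x /\ Q x).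
Proof. by move=> evp evq; apply: filterS2 evp evq. Qed.

Lemma derivable_ray_continuous f T a b :
  (forall x, T < x -> derivable f x 1) -> T < a -> {within `[a, b], continuous f}.
Proof.
move=> df Ta; apply: continuous_in_subspaceT => x.
rewrite inE /= in_itv /= => /andP [ax _].
by apply/differentiable_continuous/derivable1_diffP/df; exact: lt_le_trans ax.
Qed.

Lemma MVT_ray f T a b : (forall x, T < x -> derivable f x 1) -> T < a -> a <= b ->
  exists2 c, T < c & f b - f a = derive1 f c * (b - a).
Proof.
move=> df Ta ab.
have df' x : x \in `]a, b[ -> is_derive x 1 f (derive1 f x).
  rewrite in_itv /= => /andP [ax _]; rewrite derive1E.
  by apply/derivableP/df; exact: lt_trans ax.
have [c] := MVT_segment ab df' (derivable_ray_continuous (b := b) df Ta).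
by rewrite in_itv /= => /andP [ac _] fab; exists c => //; exact: lt_le_trans ac.
Qed.

Lemma IVT_ray f T a b : (forall x, T < x -> derivable f x 1) -> T < a -> T < b ->
  f a * f b <= 0 -> exists2 c, T < c & f c = 0.
Proof.
move=> df Ta Tb fab; wlog ab : a b Ta Tb fab / a <= b.
  move=> wlog_ab; have [|/ltW ba] := leP a b; first exact: wlog_ab.
  by apply: (wlog_ab b a) => //; rewrite mulrC.
have [|c] := IVT ab (derivable_ray_continuous (b := b) df Ta) (v := 0).
  rewrite ge_min le_max; apply/andP; split; apply/orP.
  - by have [|fa0] := leP (f a) 0; [left | right; nra].
  - by have [|fa0] := leP 0 (f a); [left | right; nra].
by rewrite in_itv /= => /andP [ac _] fc0; exists c => //; exact: lt_le_trans ac.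
Qed.

Lemma nonzero_ray_sign f T : (forall x, T < x -> derivable f x 1) ->
  (forall x, T < x -> f x != 0) -> exists2 s : R, `|s| = 1 & forall x, T < x -> 0 < s * f x.
Proof.
move=> df f_neq0; have Ta : T < T + 1 by rewrite ltrDl.
exists (Num.sg (f (T + 1))); first by rewrite normr_sg f_neq0.
move=> x Tx; rewrite ltNge; apply/negP => sfx.
have [|c Tc fc0] := IVT_ray df Ta Tx.
  by rewrite {1}[f (T + 1)]numEsg mulrAC mulr_le0_ge0.
by move: (f_neq0 c Tc); rewrite fc0 eqxx.
Qed.

Lemma derive1_ge_not_prec_id f T c : (forall x, T < x -> derivable f x 1) -> 0 < c ->
  (forall x, T < x -> c <= `|derive1 f x|) -> ~ prec f (fun t => t).
Proof.
move=> df c0 fc /cvgr0Pnorm_lt /(_ (c / 2) (divr_gt0 c0 (ltr0Sn _ 1))) /evP [M fM].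
pose y := maxr (maxr T M) 0 + 1.
have [Ty My y0] : [/\ T < y, M < y & 0 < y] by rewrite /y !ltr_pwDr // !le_max lexx ?orbT.
(* At this [x], [c * (x - y) <= |f x - f y|] exceeds [c * x / 2 + |f y|]. *)
pose K := `|f y| / c; pose x := 2 * y + 2 * K + 1.
have cK : c * K = `|f y| by rewrite /K mulrCA mulfV ?mulr1 ?gt_eqF.
have cx : c * x = 2 * (c * y) + 2 * `|f y| + c by rewrite /x -cK; ring.
have yx : y < x.
  have : 0 <= K by rewrite divr_ge0 // ltW.
  rewrite /x; lra.
have fx_small : `|f x| < c / 2 * x.
  have := fM x (lt_trans My yx); rewrite normrM normfV (gtr0_norm (lt_trans y0 yx)).
  by rewrite ltr_pdivrMr // (lt_trans y0 yx).
have [xi Txi fxy] := MVT_ray df Ty (ltW yx).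
have growth : c * x - c * y <= `|f x| + `|f y|.
  rewrite -mulrBr -[`|f y|]normrN (le_trans _ (ler_normD _ _)) // fxy normrM.
  by rewrite [X in _ <= _ * X]gtr0_norm ?subr_gt0 // ler_wpM2r ?subr_ge0 ?(ltW yx) ?fc.
have : c / 2 * x = c * x / 2 by ring.
lra.
Qed.

Lemma nondecreasing_ray_small_or_large g T eps :
  (forall x y, T < x -> x <= y -> g x <= g y) ->
  ev (fun x => `|g x| <= eps) \/ ev (fun x => eps <= `|g x|).
Proof.
move=> g_mono.
have [[x0 Tx0 gx0]|g_le] := pselect (exists2 x0, T < x0 & eps < g x0).
  right; apply/evP; exists x0 => x x0x; apply: le_trans (ler_norm _).
  exact/ltW/(lt_le_trans gx0)/g_mono/ltW.
have [[y Ty gy]|g_ge] := pselect (exists2 y, T < y & - eps <= g y).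
  left; apply/evP; exists y => x yx; rewrite ler_norml (le_trans gy (g_mono _ _ Ty (ltW yx))).
  by rewrite leNgt; apply/negP => gx; apply: g_le; exists x => //; exact: lt_trans yx.
right; apply/evP; exists T => x Tx; rewrite ler_normr lerNr; apply/orP; right.
by rewrite leNgt; apply/negP => /ltW gx; apply: g_ge; exists x.
Qed.

Lemma hardy_ev_sign H f : hardy_field H -> H f ->
  exists2 s : R, `|s| = 1 & ev (fun x => 0 <= s * f x).
Proof.
move=> [[_ _ _ _ f_inv] f_der] Hf.
have [f0|/(f_inv f Hf) [g _ fg1]] := pselect (ev (fun x => f x = 0)).
  by exists 1; [rewrite normr1 | apply: filterS f0 => x ->; rewrite mulr0].
have /evP [T fT] := ev_and (f_der f Hf).1 fg1.
have [|s s1 sf] := nonzero_ray_sign (fun x Tx => (fT x Tx).1).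
  move=> x /fT [_ fg]; apply/eqP => fx0.
  by move: fg; rewrite fx0 mul0r => /esym/eqP; rewrite oner_eq0.
by exists s => //; apply/evP; exists T => x /sf/ltW.
Qed.

Lemma hardy_derive1_small H L eps : hardy_field H -> H L -> prec L (fun t => t) ->
  0 < eps -> ev (fun x => derivable L x 1 /\ `|derive1 L x| <= eps).
Proof.
(* [s * L'] is monotone as [s * L''] >= 0; were [|L'|] eventually >= eps,
   [L] would grow linearly. *)
move=> hH HL Lt eps0; have [dL HL'] := hH.2 L HL; have [dL' HL''] := hH.2 _ HL'.
have [s s1 sL''] := hardy_ev_sign hH HL''.
have /evP [T hT] := ev_and dL (ev_and dL' sL'').
have sL'_mono x y : T < x -> x <= y -> s * derive1 L x <= s * derive1 L y.
  move=> Tx xy; have [c Tc L'xy] := MVT_ray (fun z Tz => (hT z Tz).2.1) Tx xy.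
  rewrite -subr_ge0 -mulrBr L'xy mulrA mulr_ge0 ?subr_ge0 //.
  exact: (hT c Tc).2.2.
have [small|/evP [M large]] := nondecreasing_ray_small_or_large eps sL'_mono.
  by apply: ev_and dL _; apply: filterS small => x; rewrite normrM s1 mul1r.
exfalso; apply: (derive1_ge_not_prec_id (T := maxr T M) _ eps0 _ Lt).
  by move=> x; rewrite gt_max => /andP [/hT []].
by move=> x; rewrite gt_max => /andP [_ /large]; rewrite normrM s1 mul1r.
Qed.

Lemma hardy_lipschitz H L eps : hardy_field H -> H L -> prec L (fun t => t) -> 0 < eps ->
  exists T, forall x y, T < x -> T < y -> `|L x - L y| <= eps * `|x - y|.
Proof.
move=> hH HL Lt eps0; have /evP [T hT] := hardy_derive1_small hH HL Lt eps0.
exists T => x y; wlog yx : x y / y <= x.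
  move=> wlog_yx; have [|/ltW xy Tx Ty] := leP y x; first exact: wlog_yx.
  by rewrite distrC [in X in _ <= _ * X]distrC; exact: wlog_yx.
move=> Tx Ty; have [c Tc ->] := MVT_ray (fun z Tz => (hT z Tz).1) Ty yx.
by rewrite normrM ler_wpM2r ?(hT c Tc).2 // subr_ge0.
Qed.

End RealRay.

Section Windows.
Variable R : realType.
Implicit Types (L : R -> R) (r n : nat).

Lemma sumr_nat_subrange_le (F : nat -> R) m1 m2 n2 n1 :
  (m1 <= m2)%N -> (m2 <= n2 <= n1)%N -> (forall i, 0 <= F i) ->
  \sum_(m2 <= i < n2) F i <= \sum_(m1 <= i < n1) F i.
Proof.
move=> m12 /andP [m2n2 n21] F0.
rewrite [X in _ <= X](@big_cat_nat _ _ _ m2) ?(leq_trans m2n2) //=.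
rewrite [X in _ <= _ + X](@big_cat_nat _ _ _ n2) //=.
by rewrite addrCA lerDl addr_ge0 // sumr_ge0.
Qed.

Lemma sum_nat_indicator (V : lmodType R) (a : nat -> V) m k M : (k <= M)%N ->
  \sum_(m <= n < k) a n = \sum_(0 <= n < M) (m <= n < k)%N%:R *: a n.
Proof.
move=> kM; rewrite (big_nat_widen _ _ _ _ _ kM).
rewrite (big_nat_widenl _ _ _ _ _ (leq0n m)) big_mkcond.
by apply: eq_bigr => n _; rewrite andTb andbC; case: (_ && _); rewrite ?scale1r ?scale0r.
Qed.

Lemma sum_nat_indicator_const m k M : (k <= M)%N ->
  \sum_(0 <= n < M) (m <= n < k)%N%:R = (k - m)%:R :> R.
Proof.
move=> kM; have := sum_nat_indicator (fun=> 1 : R^o) m kM.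
by rewrite sumr_const_nat => ->; apply: eq_bigr => n _; rewrite [_ *: _]mulr1.
Qed.

Definition window_len L r : nat := Num.truncn (L r%:R).

Definition in_window L r n : bool := (r <= n <= r + window_len L r)%N.

(* The total weight of [a n] in [\sum_(r0 <= r <= Rr) avg_window L r a]. *)
Definition coverage L r0 Rr n : R :=
  \sum_(r0 <= r < Rr.+1) ((window_len L r).+1%:R)^-1 * (in_window L r n)%:R.

Lemma coverage_ge0 L r0 Rr n : 0 <= coverage L r0 Rr n.
Proof. by apply: sumr_ge0 => r _; rewrite mulr_ge0. Qed.

Lemma avg_windowE (V : normedModType R) L r (a : nat -> V) : 0 <= L r%:R ->
  avg_window L r a =
    ((window_len L r).+1%:R)^-1 *: \sum_(r <= n < (r + window_len L r).+1) a n.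
Proof.
move=> Lr0; rewrite /avg_window -/(window_len L r).
set N := (r + _).+1.
have filter_true (T : Type) (idx : T) (op : T -> T -> T) (F : nat -> T) :
    \big[op/idx]_(r <= n < N | n%:R <= r%:R + L r%:R) F n = \big[op/idx]_(r <= n < N) F n.
  rewrite big_nat_cond [RHS]big_nat_cond; apply: eq_bigl => n.
  case: (boolP (r <= n < N)%N) => //= /andP [_]; rewrite ltnS -(ler_nat R) natrD => nN.
  by rewrite (le_trans nN) // lerD2l truncn_le.
by rewrite !filter_true sum_nat_const_nat muln1 /N subSn ?leq_addr // addKn.
Qed.

Lemma sum_windows_exchange (V : lmodType R) (a : nat -> V) (w : nat -> R) L r0 Rr M :
  (forall r, (r <= Rr)%N -> (r + window_len L r < M)%N) ->
  \sum_(r0 <= r < Rr.+1) w r *: \sum_(r <= n < (r + window_len L r).+1) a n =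
  \sum_(0 <= n < M) (\sum_(r0 <= r < Rr.+1) w r * (in_window L r n)%:R) *: a n.
Proof.
move=> hM; rewrite (eq_big_nat _ _
  (F2 := fun r => \sum_(0 <= n < M) (w r * (in_window L r n)%:R) *: a n)); last first.
  move=> r /andP [_ rR]; rewrite (sum_nat_indicator _ _ (hM r _)) // scaler_sumr.
  by apply: eq_bigr => n _; rewrite scalerA.
by rewrite exchange_big; apply: eq_bigr => n _; rewrite scaler_suml.
Qed.

Lemma sum_coverage L r0 Rr M :
  (forall r, (r <= Rr)%N -> (r + window_len L r < M)%N) ->
  \sum_(0 <= n < M) coverage L r0 Rr n = (Rr.+1 - r0)%:R.
Proof.
move=> hM; have := sum_windows_exchange (fun=> 1 : R^o)
  (fun r => ((window_len L r).+1%:R)^-1) r0 hM.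
under [in X in _ = X -> _]eq_bigr do rewrite [_ *: _]mulr1.
move=> <-; rewrite -sumr_const_nat; apply: eq_bigr => r _.
by rewrite sumr_const_nat subSn ?leq_addr // addKn [_ *: _]mulVf.
Qed.

Lemma norm_sum_weight_diff_le (V : normedModType R) (a : nat -> V) (e c delta : nat -> R) M :
  (forall n, `|a n| <= 1) -> (forall n, 0 <= delta n) -> (forall n, e n - c n <= delta n) ->
  `|\sum_(0 <= n < M) (e n - c n) *: a n| <=
    \sum_(0 <= n < M) (c n - e n) + 2 * \sum_(0 <= n < M) delta n.
Proof.
move=> a1 delta0 ec_le; apply: le_trans (ler_norm_sum _ _ _) _.
rewrite mulr_sumr -big_split /=; apply: ler_sum_nat => n _.
rewrite normrZ; apply: le_trans (ler_wpM2l (normr_ge0 _) (a1 n)) _.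
by have := ec_le n; have := delta0 n; rewrite mulr1 ler_norml => *; apply/andP; split; lra.
Qed.

Lemma norm_sum_le_sum_avg_window (V : normedModType R) (a : nat -> V) L r0 N0 Rr eta :
  (forall n, `|a n| <= 1) -> (0 < r0 <= N0)%N -> (N0 <= Rr)%N -> 0 <= eta ->
  (forall r, (r0 <= r)%N -> 0 <= L r%:R) ->
  (forall n, (N0 <= n <= Rr)%N -> 1 - eta <= coverage L r0 Rr n) ->
  `|\sum_(1 <= n < Rr.+1) a n| <=
    \sum_(1 <= r < Rr.+1) `|avg_window L r a| + (1 + 2 * N0%:R + 2 * eta * Rr%:R).
Proof.
move=> a1 /andP [r0_gt0 r0N0] N0Rr eta0 L0 cov.
pose M := maxn Rr.+1 (\max_(r < Rr.+1) (r + window_len L r)).+1.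
have RM : (Rr.+1 <= M)%N by rewrite leq_maxl.
have windowsM r : (r <= Rr)%N -> (r + window_len L r < M)%N.
  rewrite -ltnS => rR; rewrite leq_max; apply/orP; right; rewrite ltnS.
  exact: (leq_bigmax (F := fun i : 'I_Rr.+1 => (i + window_len L i)%N) (Ordinal rR)).
pose e n : R := (1 <= n < Rr.+1)%N%:R.
pose delta n : R := (n < N0)%N%:R + eta * e n.
have ec_le n : e n - coverage L r0 Rr n <= delta n.
  have := coverage_ge0 L r0 Rr n; rewrite /delta /e.
  case: (ltnP n N0) => [_|N0n]; case: (boolP (1 <= n < Rr.+1)%N) => [nR|_] /=; try lra.
  by have := cov n; rewrite N0n -ltnS (andP nR).2 => /(_ isT); lra.
have delta_ge0 n : 0 <= delta n by rewrite addr_ge0 ?mulr_ge0.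
have := norm_sum_weight_diff_le M a1 delta_ge0 ec_le.
under eq_bigr do rewrite scalerBl.
have sumW : \sum_(r0 <= r < Rr.+1) avg_window L r a =
    \sum_(0 <= n < M) coverage L r0 Rr n *: a n.
  rewrite -sum_windows_exchange //; apply: eq_big_nat => r /andP [r0r _].
  exact/avg_windowE/L0.
rewrite sumrB -sum_nat_indicator // -sumW.
have sum_lt_N0 : \sum_(0 <= n < M) (n < N0)%N%:R = N0%:R :> R.
  by rewrite -[in RHS](subn0 N0) -(sum_nat_indicator_const 0 (leq_trans N0Rr (ltnW RM))).
rewrite sumrB sum_coverage // big_split /= -mulr_sumr sum_lt_N0 sum_nat_indicator_const //.
set S := \sum_(1 <= n < Rr.+1) a n; set W := \sum_(r0 <= r < Rr.+1) _ => SW.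
have W_le : `|W| <= \sum_(1 <= r < Rr.+1) `|avg_window L r a|.
  apply: le_trans (ler_norm_sum _ _ _) (sumr_nat_subrange_le r0_gt0 _ _) => //.
  by rewrite leqnn andbT (leq_trans r0N0) // ltnW.
have : `|S| <= `|W| + `|S - W| by rewrite -{1}(subrK W S) addrC ler_normD.
have : (Rr.+1 - r0)%:R <= Rr.+1%:R :> R by rewrite ler_nat leq_subr.
move: SW W_le; rewrite subSS subn0 -natr1 => *; lra.
Qed.

Lemma coverage_ge_window_count L r0 Rr n k D : (r0 + k <= n <= Rr)%N -> 0 < D ->
  (forall r, (n - k <= r <= n)%N -> (n <= r + window_len L r)%N /\ (window_len L r).+1%:R <= D) ->
  k.+1%:R / D <= coverage L r0 Rr n.
Proof.
move=> /andP [r0kn nR] D0 windows.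
have kn : (k <= n)%N by lia.
have -> : k.+1%:R / D = \sum_(n - k <= r < n.+1) D^-1.
  by rewrite sumr_const_nat subSn ?leq_subr // subKn // mulr_natl.
rewrite /coverage; apply: (@le_trans _ _
  (\sum_(n - k <= r < n.+1) ((window_len L r).+1%:R)^-1 * (in_window L r n)%:R)).
  apply: ler_sum_nat => r /andP [nkr]; rewrite ltnS => rn.
  have [nwin lenD] := windows r (introT andP (conj nkr rn)).
  by rewrite /in_window rn nwin mulr1 lef_pV2 ?posrE ?ltr0n.
by apply: sumr_nat_subrange_le => [||r]; [lia | lia | rewrite mulr_ge0].
Qed.

Lemma lipschitz_coverage_ge L T eps r0 Rr n : 0 < eps <= 1 -> T < r0%:R ->
  (forall x y, T < x -> T < y -> `|L x - L y| <= eps * `|x - y|) ->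
  (forall x, T < x -> 1 <= eps * L x /\ 2 * L x <= x) ->
  (2 * r0 <= n <= Rr)%N -> 1 - 3 * eps <= coverage L r0 Rr n.
Proof.
move=> /andP [eps0 eps1] Tr0 Llip Lbig /andP [r0n nR].
have T_lt m : (r0 <= m)%N -> T < m%:R.
  by move=> r0m; apply: lt_le_trans Tr0 _; rewrite ler_nat.
have Tn : T < n%:R by apply/T_lt/(leq_trans _ r0n)/leq_pmull.
have [epsl ln] := Lbig _ Tn; set l := L n%:R in epsl ln *.
have l0 : 0 <= l by nra.
(* The windows of all [r] in [[n - k, n]], [k ~ (1 - eps) * L n], contain [n]
   and have length at most [(1 + eps) * L n]. *)
have [k k_le k_gt] : exists2 k : nat, k%:R <= (1 - eps) * l & (1 - eps) * l < k%:R + 1.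
  exists (Num.truncn ((1 - eps) * l)); last by rewrite natr1 -truncn_le_nat.
  by rewrite truncn_le mulr_ge0 ?subr_ge0.
have kn : (2 * k <= n)%N by rewrite -(ler_nat R) natrM (le_trans _ ln) // ler_pM2l //; nra.
pose D := (1 + eps) * l + 1.
have D0 : 0 < D by rewrite /D; nra.
have r0kn : (r0 + k <= n)%N.
  by rewrite -(leq_pmul2l (isT : (0 < 2)%N)) mulnDr [X in (_ <= X)%N]mul2n -addnn leq_add.
apply: le_trans (coverage_ge_window_count (k := k) (D := D) _ D0 _).
- by rewrite ler_pdivlMr // -natr1 /D; nra.
- by rewrite r0kn nR.
move=> r /andP [nkr rn]; have Tr : T < r%:R.
  apply/T_lt/(leq_trans _ nkr).
  rewrite leq_subRL; first by rewrite addnC.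
  exact: leq_trans (leq_addl r0 k) r0kn.
have Lr_near : `|L r%:R - l| <= eps * k%:R.
  apply: le_trans (Llip _ _ Tr Tn) _.
  by rewrite ler_pM2l // distrC -natrB // normr_nat ler_nat leq_subCl.
move: Lr_near; rewrite ler_norml => /andP [Lr_ge Lr_le].
have Lr0 : 0 <= L r%:R by nra.
split.
  have kr : (k <= window_len L r)%N by rewrite /window_len truncn_ge_nat //; nra.
  by rewrite -leq_subLR (leq_trans _ kr) // leq_subCl.
have : (window_len L r)%:R <= L r%:R by rewrite truncn_le.
rewrite -natr1 /D; nra.
Qed.

End Windows.

Section Averages.
Variable R : realType.

Lemma ev_window_scale (L : R -> R) eps : 0 < eps -> ev (fun t => 0 < L t) ->
  prec (fun _ => 1) L -> prec L (fun t => t) ->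
  ev (fun x => 1 <= eps * L x /\ 2 * L x <= x).
Proof.
move=> eps0 Lpos /cvgr0Pnorm_lt /(_ _ eps0) L1.
have half0 : 0 < 2^-1 :> R by rewrite invr_gt0.
move=> /cvgr0Pnorm_lt /(_ _ half0) Lt.
apply: filterS (ev_and Lpos (ev_and L1 (ev_and Lt (nbhs_pinfty_gt (num_real 0))))).
move=> x [Lx0 [Lx1 [Lxx x0]]].
rewrite ger0_norm ?divr_ge0 ?(ltW Lx0) // ltr_pdivrMr // in Lx1.
rewrite ger0_norm ?divr_ge0 ?(ltW Lx0) ?(ltW x0) // ltr_pdivrMr // in Lxx.
split; lra.
Qed.

Lemma exprn_tangent_le (x y : R) n : 0 <= x -> 0 <= y ->
  y ^+ n + n%:R * y ^+ n.-1 * (x - y) <= x ^+ n.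
Proof.
move=> x0 y0; case: n => [|n]; first by rewrite !expr0 mul0r mul0r addr0.
elim: n => [|n IH]; first by rewrite expr0 mulr1 !expr1; lra.
have Q0 : 0 <= y ^+ n by rewrite exprn_ge0.
apply: le_trans (_ : x * (y ^+ n.+1 + n.+1%:R * y ^+ n * (x - y)) <= _); last first.
  by rewrite [x ^+ _]exprS; apply: ler_wpM2l.
rewrite -subr_ge0 !exprS -natr1; set Q := y ^+ n.
have -> : x * (y * Q + (n%:R + 1) * Q * (x - y)) - (y * (y * Q) + n.+2%:R * (y * Q) * (x - y))
    = (n%:R + 1) * Q * (x - y) ^+ 2 by rewrite -!natr1; ring.
by rewrite mulr_ge0 ?sqr_ge0 // mulr_ge0 // addr_ge0.
Qed.

Lemma avg1_exprn_le (x : nat -> R) N d : (0 < N)%N -> (forall r, 0 <= x r) ->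
  avg1 N x ^+ d <= avg1 N (fun r => x r ^+ d).
Proof.
move=> N_gt0 x0; set y := avg1 N x.
have y0 : 0 <= y by rewrite mulr_ge0 ?invr_ge0 ?sumr_ge0.
have Sx : \sum_(1 <= r < N.+1) x r = N%:R * y.
  by rewrite /y /avg1 -[_ *: _]/(_ * _) mulrA mulfV ?mul1r // pnatr_eq0 -lt0n.
have := ler_sum_nat (fun r _ => exprn_tangent_le d (x0 r) y0) (m := 1) (n := N.+1).
rewrite big_split /= -mulr_sumr sumrB !sumr_const_nat subn1 /= Sx.
rewrite -[y *+ N]mulr_natl subrr mulr0 addr0 -mulr_natl => tangent_sum.
by rewrite /avg1 -[_ *: _]/(_ * _) ler_pdivlMl ?ltr0n.
Qed.

Lemma avg1_le_avg_window_eventually (V : normedModType R) (L : R -> R) ep :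
  (forall eps, 0 < eps ->
     exists T, forall x y, T < x -> T < y -> `|L x - L y| <= eps * `|x - y|) ->
  ev (fun t => 0 < L t) -> prec (fun _ => 1) L -> prec L (fun t => t) -> 0 < ep ->
  exists N, forall Rr (a : nat -> V), (N <= Rr)%N -> (forall n, `|a n| <= 1) ->
    `|avg1 Rr a| <= avg1 Rr (fun r => `|avg_window L r a|) + ep.
Proof.
move=> Llip Lpos L1 Lt ep0.
(* The coverage defect [3 * eps] costs [6 * eps <= ep / 2], the indices below
   [N0] cost [(1 + 2 * N0) / Rr <= ep / 2]. *)
pose eps := minr 1 (ep / 12).
have eps0 : 0 < eps by rewrite lt_min ltr01 divr_gt0.
have [eps1 eps_ep] : eps <= 1 /\ eps <= ep / 12 by split; rewrite ge_min lexx ?orbT.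
have [T1 lipT1] := Llip eps eps0.
have /evP [T2 scaleT2] := ev_window_scale eps0 Lpos L1 Lt.
pose T := maxr T1 T2; pose r0 := (Num.truncn T).+1; pose N0 := (2 * r0)%N.
have Tr0 : T < r0%:R by rewrite -truncn_le_nat.
have lipT x y : T < x -> T < y -> `|L x - L y| <= eps * `|x - y|.
  by rewrite !gt_max => /andP [T1x _] /andP [T1y _]; exact: lipT1.
have scaleT x : T < x -> 1 <= eps * L x /\ 2 * L x <= x.
  by rewrite gt_max => /andP [_ /scaleT2].
exists (maxn N0 (Num.truncn (2 * (1 + 2 * N0%:R) / ep)).+1) => Rr a.
rewrite geq_max => /andP [N0Rr NRr] a1.
have L0 r : (r0 <= r)%N -> 0 <= L r%:R.
  move=> r0r; have Tr : T < r%:R by apply: lt_le_trans Tr0 _; rewrite ler_nat.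
  by have [epsL _] := scaleT _ Tr; nra.
have cover n : (N0 <= n <= Rr)%N -> 1 - 3 * eps <= coverage L r0 Rr n.
  by move=> nR; apply: (lipschitz_coverage_ge (T := T)); rewrite ?eps0.
have r0N0 : (0 < r0 <= N0)%N by rewrite leq_pmull.
have eta0 : 0 <= 3 * eps by rewrite mulr_ge0 // ltW.
have sum_le := norm_sum_le_sum_avg_window a1 r0N0 N0Rr eta0 L0 cover.
have Rr0 : 0 < Rr%:R :> R by rewrite ltr0n (leq_trans _ N0Rr) // muln_gt0.
have small : (1 + 2 * N0%:R + 2 * (3 * eps) * Rr%:R) / Rr%:R <= ep.
  have N0_ge0 : 0 <= 2 * (1 + 2 * N0%:R) :> R by rewrite mulr_ge0 ?addr_ge0.
  move: NRr; rewrite truncn_lt_nat ?divr_ge0 ?(ltW ep0) // ltr_pdivrMr // => NRr.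
  rewrite ler_pdivrMr //; nra.
rewrite /avg1 normrZ ger0_norm ?invr_ge0 // -[_ *: \sum_(1 <= r < _) _]/(_ * _).
apply: le_trans (ler_wpM2l _ sum_le) _; first by rewrite invr_ge0 ltW.
by rewrite mulrDr lerD2l mulrC.
Qed.

Local Open Scope ereal_scope.

Lemma limn_esupE (u : (\bar R)^nat) : limn_esup u = ereal_inf (range (esups u)).
Proof. by rewrite limn_esup_lim; apply/cvg_lim => //; exact: cvg_esups_inf. Qed.

Lemma limn_esup_lt_eventually (u : (\bar R)^nat) x :
  limn_esup u < x -> exists N, forall n, (N <= n)%N -> u n < x.
Proof.
rewrite limn_esupE => /ereal_inf_lt [_ [N _ <-]] supN_lt.
exists N => n Nn; apply: le_lt_trans supN_lt.
by apply: ereal_sup_ubound; exists n.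
Qed.

Lemma limn_esup_le_eventually (u : (\bar R)^nat) x :
  (exists N, forall n, (N <= n)%N -> u n <= x) -> limn_esup u <= x.
Proof.
move=> [N u_le]; rewrite limn_esupE; apply: (@le_trans _ _ (esups u N)).
  by apply: ereal_inf_lbound; exists N.
by apply: ge_ereal_sup => _ [n /= Nn <-]; exact: u_le.
Qed.

End Averages.

Theorem lemma3p3 (R : realType) (H : set (R -> R)) (V : normedModType R)
  (d : nat) (A : nat -> nat -> V) (L : R -> R) (C : R) :
  standing_hardy H ->
  (0 < d)%N ->
  (forall Rr n, `|A Rr n| <= 1) ->
  H L ->
  ev (fun t => 0 < L t) ->
  prec (fun _ => 1) L ->
  prec L (fun t => t) ->
  0 < C ->
  (limn_esup (fun Rr : nat =>
     ((avg1 Rr (fun r => `|avg_window L r (A Rr)| ^+ d)) : R)%:E) <= C%:E)%E ->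
  (limn_esup (fun Rr : nat => (`|avg1 Rr (A Rr)|)%:E) <= (C `^ (d%:R^-1))%:E)%E.
Proof.
move=> [hH _ _ _] d0 A1 HL Lpos L1 Lt C0 limsup_le.
set c := C `^ d%:R^-1.
have c0 : 0 <= c by exact: powR_ge0.
have cd : c ^+ d = C.
  rewrite /c -powR_mulrn ?powR_ge0 // -powRrM mulVf ?powRr1 ?(ltW C0) //.
  by rewrite pnatr_eq0 -lt0n.
apply/lee_addgt0Pr => ep ep0; set y := c + ep / 2.
have Cy : C < y ^+ d by rewrite -cd ltrXn2r -?lt0n // /y; lra.
have [N1 avgd_lt] :=
  limn_esup_lt_eventually (le_lt_trans limsup_le (Cy : (C%:E < (y ^+ d)%:E)%E)).
have [N2 avg1_le] := avg1_le_avg_window_eventually V (fun _ => hardy_lipschitz hH HL Lt)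
  Lpos L1 Lt (divr_gt0 ep0 (ltr0Sn _ 1)).
apply: limn_esup_le_eventually; exists (maxn (maxn N1 N2) 1) => Rr.
rewrite !geq_max => /andP [/andP [N1Rr N2Rr] Rr0].
have avg_w_lt : avg1 Rr (fun r => `|avg_window L r (A Rr)|) < y.
  have w0 : 0 <= avg1 Rr (fun r => `|avg_window L r (A Rr)|).
    by rewrite mulr_ge0 ?invr_ge0 ?sumr_ge0.
  have y0 : 0 <= y by rewrite /y; lra.
  rewrite -(ltr_pXn2r d0) ?nnegrE //; apply: le_lt_trans (avg1_exprn_le _ Rr0 _) _ => //.
  by rewrite -lte_fin; exact: avgd_lt.
rewrite -EFinD lee_fin; apply: le_trans (avg1_le Rr (A Rr) N2Rr (A1 Rr)) _.
by rewrite /y in avg_w_lt; lra.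
Qed.
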